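(* Let $X$ be a Polish space and $\varphi\colon X \to [0,\infty]$ a function. Define \[ U(\varphi) = \inf\{ \psi \colon \psi\colon X \to [0,\infty] \text{ upper semi-continuous and } \varphi \leq^* \psi\} \] (pointwise infimum). Then $U(\varphi)$ is upper semi-continuous, $\varphi \leq^* U(\varphi)$, and $U(\varphi)$ is the least upper semi-continuous function with this property. Moreover the following are equivalent: (1) $\varphi \geq^* U(\varphi)$; (2) $\varphi =^* U(\varphi)$; (3) there exists an upper semi-continuous $\psi\colon X \to [0,\infty]$ with $\varphi =^* \psi$; (4) $\varphi$ is Baire measurable as a function.
   Context: For functions $\varphi,\psi$ on $X$, $\varphi \leq^* \psi$ means that the set $\{x \colon \varphi(x) > \psi(x)\}$ is meagre in $X$; $\varphi \geq^* \psi$ means $\psi \leq^* \varphi$; and $\varphi =^* \psi$ means both. A function $\psi$ is upper semi-continuous if $\{x\colon \psi(x)<r\}$ is open for all real $r$. *)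

From HB Require Import structures.
From mathcomp Require Import all_boot all_order all_algebra.
From mathcomp Require Import all_classical all_reals all_analysis.
Set Implicit Arguments. Unset Strict Implicit. Unset Printing Implicit Defensive.
Import Order.TTheory GRing.Theory Num.Theory.
Local Open Scope classical_set_scope.
Local Open Scope ring_scope.

Section Defs.
Variable R : realType.
Variable X : topologicalType.

Definition metric_for (d : X -> X -> R) : Prop :=
  [/\ (forall x y, 0 <= d x y),
      (forall x y, d x y = 0 <-> x = y),
      (forall x y, d x y = d y x),
      (forall x y z, d x z <= d x y + d y z) &
      (forall A : set X, open A <->
         (forall x, A x -> exists e : R, 0 < e /\ [set y | d x y < e] `<=` A))].

Definition metric_complete (d : X -> X -> R) : Prop :=
  forall u : nat -> X,
    (forall e : R, 0 < e -> exists N : nat, forall m n : nat,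
        (N <= m)%N -> (N <= n)%N -> d (u m) (u n) < e) ->
    exists x : X, u @ \oo --> x.

Definition polish : Prop :=
  (exists D : set X, countable D /\ dense D) /\
  (exists d : X -> X -> R, metric_for d /\ metric_complete d).

Definition nowhere_dense (A : set X) : Prop := (closure A)° = set0.

Definition meagre (A : set X) : Prop :=
  exists F : nat -> set X, (forall n, nowhere_dense (F n)) /\
    A `<=` \bigcup_n F n.

Definition le_star (f g : X -> \bar R) : Prop :=
  meagre [set x | (g x < f x)%E].
Definition ge_star (f g : X -> \bar R) : Prop := le_star g f.
Definition eq_star (f g : X -> \bar R) : Prop := le_star f g /\ ge_star f g.

Definition usc (f : X -> \bar R) : Prop :=
  forall r : R, open [set x | (f x < r%:E)%E].

Definition nonneg (f : X -> \bar R) : Prop := forall x, (0 <= f x)%E.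

Definition Uenv (phi : X -> \bar R) : X -> \bar R :=
  fun x => ereal_inf [set psi x | psi in
     [set psi : X -> \bar R | usc psi /\ nonneg psi /\ le_star phi psi]].

Definition baire_property (A : set X) : Prop :=
  exists U : set X, open U /\ meagre ((A `\` U) `|` (U `\` A)).

Definition baire_measurable (f : X -> \bar R) : Prop :=
  forall B : set (\bar R), open B -> baire_property (f @^-1` B).
End Defs.

From HB Require Import structures.
From mathcomp Require Import all_boot all_order all_algebra.
From mathcomp Require Import all_classical all_reals all_analysis.
From mathcomp Require Import lra.
Import Order.TTheory GRing.Theory Num.Theory.
Local Open Scope classical_set_scope.
Local Open Scope ring_scope.

(* U(phi) is a pointwise infimum of usc functions, hence usc.  Since X is
   second countable, each open set {U(phi) < q} is already covered by the sets
   {psi < q} for countably many usc majorants psi, so {U(phi) < phi} lies in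
   countably many of the meagre sets {psi < phi}.  Usc functions are Baire
   measurable, and so is anything equal to one off a meagre set.  Conversely,
   if phi is Baire measurable and V is open with {phi < q} =* V, then
   min(U(phi), q on V, +oo off V) is again a usc majorant, so U(phi) <= q on V
   and {phi < q < U(phi)} lies in the meagre set {phi < q} \ V; a union over
   rational q gives phi >=* U(phi). *)

Definition symdiff {T : Type} (A B : set T) : set T := (A `\` B) `|` (B `\` A).

Section Symdiff.
Context {T : Type}.
Implicit Types A B C V : set T.

Lemma symdiffxx A : symdiff A A = set0.
Proof. by apply/seteqP; split=> x // [[]|[]]. Qed.

Lemma symdiff_trans A B C : symdiff A C `<=` symdiff A B `|` symdiff B C.
Proof.
move=> x [[Ax nCx]|[Cx nAx]]; have [Bx|nBx] := pselect (B x).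
- by right; left.
- by left; left.
- by left; right.
- by right; right.
Qed.

Lemma symdiff_setI A B V : symdiff (A `&` V) (B `&` V) `<=` symdiff A B.
Proof.
by move=> x [[[Ax Vx] nBV]|[[Bx Vx] nAV]]; [left|right]; split=> // ?;
  [apply: nBV|apply: nAV].
Qed.

Lemma symdiff_bigcup {I : Type} (P : set I) (A B : I -> set T) :
  symdiff (\bigcup_(i in P) A i) (\bigcup_(i in P) B i) `<=`
  \bigcup_(i in P) symdiff (A i) (B i).
Proof.
move=> x [[[i Pi Ai] nB]|[[i Pi Bi] nA]]; exists i => //.
- by left; split=> // Bi; apply: nB; exists i.
- by right; split=> // Ai; apply: nA; exists i.
Qed.

Lemma symdiff_preimage {U : Type} (f g : T -> U) (B : set U) :
  symdiff (f @^-1` B) (g @^-1` B) `<=` [set x | f x <> g x].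
Proof.
by move=> x [[Bf nBg]|[Bg nBf]] fg; [apply: nBg; rewrite /= -fg|apply: nBf; rewrite /= fg].
Qed.

End Symdiff.

Section Meagre.
Context {X : topologicalType}.
Implicit Types A B : set X.

Lemma nowhere_dense0 : nowhere_dense (set0 : set X).
Proof. by rewrite /nowhere_dense closure0 interior0. Qed.

Lemma nowhere_dense_meagre {A} : nowhere_dense A -> meagre A.
Proof. by move=> ndA; exists (fun=> A); split=> // x Ax; exists 0%N. Qed.

Lemma meagreS {A B} : A `<=` B -> meagre B -> meagre A.
Proof. by move=> AB [F [ndF BF]]; exists F; split=> // x /AB /BF. Qed.

Lemma meagre0 : meagre (set0 : set X).
Proof. exact/nowhere_dense_meagre/nowhere_dense0. Qed.

Lemma meagre_bigcup (T : countType) (P : set T) (A : T -> set X) :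
  (forall t, P t -> meagre (A t)) -> meagre (\bigcup_(t in P) A t).
Proof.
move=> mA.
have /choice[F hF] : forall t, exists F : nat -> set X,
    (forall n, nowhere_dense (F n)) /\ (P t -> A t `<=` \bigcup_n F n).
  move=> t; have [/mA [F [ndF AF]]|nPt] := pselect (P t); first by exists F.
  by exists (fun=> set0); split=> [_|/nPt//]; exact: nowhere_dense0.
exists (fun k => if unpickle k is Some (t, n) then F t n else set0); split.
  move=> k; case: (unpickle k) => [[t n]|]; last exact: nowhere_dense0.
  exact: (hF t).1.
move=> x [t Pt /((hF t).2 Pt) [n _ Fx]].
by exists (pickle (t, n)) => //; rewrite pickleK.
Qed.

Lemma meagre_bigcup_countable (I : Type) (P : set I) (A : I -> set X) :
  countable P -> (forall i, P i -> meagre (A i)) -> meagre (\bigcup_(i in P) A i).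
Proof.
rewrite -(eq_countable (card_setT P)) bigcup_set_type => cP mA.
set B := fun j : P => A (val j).
have {}mA (j : P) : meagre (B j) by apply: mA; exact: set_valP.
move: (P : Type) cP B mA => {I P A}T /Pcountable[{}T ->] A mA.
exact: meagre_bigcup.
Qed.

Lemma meagreU {A B} : meagre A -> meagre B -> meagre (A `|` B).
Proof.
by move=> mA mB; rewrite -bigcup2E; apply: meagre_bigcup => -[|[|n]] //= _; exact: meagre0.
Qed.

End Meagre.

Section BaireProperty.
Context {X : topologicalType}.
Implicit Types A B C U V : set X.

Lemma open_baire_property U : open U -> baire_property U.
Proof.
by move=> oU; exists U; split=> //; rewrite -/(symdiff U U) symdiffxx; exact: meagre0.
Qed.

Lemma closed_baire_property C : closed C -> baire_property C.
Proof.
move=> cC; exists C°; split; first exact: open_interior.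
have cCC : closed (C `\` C°) by apply: closedI => //; exact/open_closedC/open_interior.
have ndCC : nowhere_dense (C `\` C°).
  rewrite /nowhere_dense -(iffLR (closure_id _) cCC); apply/seteqP; split=> // x.
  move=> /[dup] /interior_subset [_ nCx] CCx; apply: nCx.
  by apply: interiorS CCx => y [].
apply: meagreS _ (nowhere_dense_meagre ndCC) => x [//|[/interior_subset Cx /(_ Cx) []]].
Qed.

Lemma bigcup_baire_property (T : countType) (P : set T) (A : T -> set X) :
  (forall t, P t -> baire_property (A t)) -> baire_property (\bigcup_(t in P) A t).
Proof.
move=> bA.
have /choice[U hU] : forall t, exists U, P t -> open U /\ meagre (symdiff (A t) U).
  move=> t; have [/bA [U bU]|nPt] := pselect (P t); first by exists U.
  by exists set0 => /nPt.
exists (\bigcup_(t in P) U t); split; first by apply: bigcup_open => t /hU[].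
apply: meagreS (symdiff_bigcup _ _ _) _.
by apply: meagre_bigcup => t /hU[].
Qed.

Lemma setI_open_baire_property A V :
  open V -> baire_property A -> baire_property (A `&` V).
Proof.
move=> oV [U [oU mAU]]; exists (U `&` V); split; first exact: openI.
exact: meagreS (symdiff_setI _ _ _) mAU.
Qed.

Lemma baire_property_symdiff A B :
  baire_property A -> meagre (symdiff B A) -> baire_property B.
Proof.
move=> [U [oU mAU]] mBA; exists U; split=> //.
exact: meagreS (symdiff_trans _ _ _) (meagreU mBA mAU).
Qed.

End BaireProperty.

Section RationalsInExtendedReals.
Context {R : realType}.
Local Open Scope ereal_scope.

Lemma rat_between (a b : R) : (a < b)%R -> exists q : rat, (a < ratr q < b)%R.
Proof.
move=> ab; have [||] := @dense_rat R [set` `]a, b[%R].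
- by exists ((a + b) / 2)%R; rewrite /= in_itv /= !midf_lt.
- exact: interval_open.
by move=> y [/= + [q _ qy]]; rewrite -qy in_itv /=; exists q.
Qed.

Lemma ereal_rat_between (a b : \bar R) : a < b -> exists q : rat, a < (ratr q)%:E < b.
Proof.
have fin_between (c d : R) : (c < d)%R -> exists q : rat, c%:E < (ratr q)%:E < d%:E.
  by move=> /rat_between[q qcd]; exists q; rewrite !lte_fin.
case: a b => [a| |] [b| |] //= ab.
- exact: fin_between.
- have [|q /andP[aq _]] := @fin_between a (a + 1)%R; first by rewrite ltrDl.
  by exists q; rewrite aq ltry.
- have [|q /andP[_ qb]] := @fin_between (b - 1)%R b; first by rewrite ltrBlDr ltrDl.
  by exists q; rewrite qb ltNyr.
- by exists 0%Q; rewrite ltNyr ltry.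
Qed.

(* [None] stands for an infinite endpoint, so that neighbourhoods of +oo and
   -oo are covered too. *)
Definition ereal_rat_interval (a b : option rat) : set (\bar R) :=
  (if a is Some a then [set y | (ratr a)%:E < y] else setT) `&`
  (if b is Some b then [set y | y < (ratr b)%:E] else setT).

Lemma open_ereal_rat_intervals {B : set (\bar R)} : open B ->
  B = \bigcup_(i in [set i | ereal_rat_interval i.1 i.2 `<=` B])
        ereal_rat_interval i.1 i.2.
Proof.
move=> oB; apply/seteqP; split=> [y By|y [i /= iB /iB]] //.
have : nbhs y B by exact: open_nbhs_nbhs.
case: y By => [p| |] _ nbB.
- have /nbhs_ballP[e /= e0 peB] := iffLR (nbhs_EFin _ _) nbB.
  have [|q1 /andP[q1p pq1]] := @rat_between (p - e)%R p; first by rewrite ltrBlDr ltrDl.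
  have [|q2 /andP[pq2 q2p]] := @rat_between p (p + e)%R; first by rewrite ltrDl.
  exists (Some q1, Some q2); last by split; rewrite /= lte_fin.
  move=> [r| |] [/= q1r rq2] //; apply: peB.
  rewrite /ball /= ltr_distlC; rewrite !lte_fin in q1r rq2.
  by rewrite (lt_trans q1p q1r) (lt_trans rq2 q2p).
- case: nbB => M [_ MB].
  have [|q /andP[Mq _]] := @rat_between M (M + 1)%R; first by rewrite ltrDl.
  exists (Some q, None); last by split; rewrite //= ltry.
  by move=> y [/= qy _]; apply: MB; apply: lt_trans qy; rewrite lte_fin.
- case: nbB => M [_ MB].
  have [|q /andP[_ qM]] := @rat_between (M - 1)%R M; first by rewrite ltrBlDr ltrDl.
  exists (None, Some q); last by split; rewrite //= ltNyr.
  by move=> y [_ /= yq]; apply: MB; apply: lt_trans yq _; rewrite lte_fin.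
Qed.

End RationalsInExtendedReals.

Section UpperSemicontinuous.
Context {R : realType} {X : topologicalType}.
Implicit Types f g : X -> \bar R.
Local Open Scope ereal_scope.

Lemma usc_min {f g} : usc f -> usc g -> usc (f \min g).
Proof.
move=> uf ug r.
have -> : [set x | (f \min g) x < r%:E] = [set x | f x < r%:E] `|` [set x | g x < r%:E].
  by apply/seteqP; split=> x /=; rewrite gt_min => /orP.
exact: openU.
Qed.

Lemma usc_cst_on_open (V : set X) (r : R) :
  open V -> usc (fun x => if `[< V x >] then r%:E else +oo).
Proof.
move=> oV s; have [rs|sr] := ltP r s.
- suff -> : [set x | (if `[< V x >] then r%:E else +oo) < s%:E] = V by [].
  by apply/seteqP; split=> x /=; case: asboolP => // _; rewrite ?ltNge ?leey.
- suff -> : [set x | (if `[< V x >] then r%:E else +oo) < s%:E] = set0 by exact: open0.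
  by apply/seteqP; split=> x //=; case: asboolP => _; rewrite ltNge ?leey ?lee_fin ?sr.
Qed.

Lemma usc_gt_baire_property f (r : R) : usc f -> baire_property [set x | r%:E < f x].
Proof.
move=> uf.
have -> : [set x | r%:E < f x] =
    \bigcup_(q in [set q : rat | (r < ratr q)%R]) ~` [set x | f x < (ratr q)%:E].
  apply/seteqP; split=> x /=.
  - move=> /ereal_rat_between[q /andP[rq qf]]; exists q; first by rewrite /= -lte_fin.
    by apply/negP; rewrite -leNgt ltW.
  - by move=> [q /= rq /negP]; rewrite -leNgt; apply: lt_le_trans; rewrite lte_fin.
apply: bigcup_baire_property => q _; apply: closed_baire_property.
exact/open_closedC/uf.
Qed.

Lemma usc_baire_measurable {f} : usc f -> baire_measurable f.
Proof.
move=> uf B oB; rewrite (open_ereal_rat_intervals oB) preimage_bigcup.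
apply: bigcup_baire_property => -[a b] _; apply: setI_open_baire_property.
- by case: b => [b|] /=; [exact: uf|exact: openT].
- by case: a => [a|] /=; [exact: usc_gt_baire_property|exact/open_baire_property/openT].
Qed.

Lemma baire_measurable_meagre_neq {f g} :
  baire_measurable f -> meagre [set x | g x <> f x] -> baire_measurable g.
Proof.
move=> bf mgf B oB; apply: baire_property_symdiff (bf B oB) _.
exact: meagreS (symdiff_preimage _ _ _) mgf.
Qed.

Lemma eq_star_meagre_neq f g : eq_star f g -> meagre [set x | f x <> g x].
Proof.
case=> mgf mfg; apply: meagreS _ (meagreU mgf mfg) => x /eqP.
by rewrite neq_lt => /orP[]; [right|left].
Qed.

End UpperSemicontinuous.

Section SecondCountable.
Context {X : topologicalType}.

Lemma polish_second_countable {R : realType} : polish R X -> @second_countable X.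
Proof.
case=> -[D [cD dD]] [d [[_ dxx dC dtri dopen] _]].
pose ball a (n : nat) := [set y | d a y < n.+1%:R^-1].
have ball_open a n : open (ball a n).
  apply/dopen => z /= daz; exists (n.+1%:R^-1 - d a z); split; first by rewrite subr_gt0.
  move=> y /= dzy; rewrite /ball /=; have := dtri a z y; move: dzy.
  by set r := n.+1%:R^-1; lra.
exists ((fun p => ball p.1 p.2) @` (D `*` setT)).
  apply: sub_countable (card_image_le _ _) _; exact: countableX.
split; first by move=> _ [[a n] _ <-].
move=> x A; rewrite nbhsE; case=> O [oO Ox] OA.
have [e [e0 xeO]] := iffLR (dopen O) oO x Ox.
have e2 : 0 < e / 2 by rewrite divr_gt0.
have [N _ /(_ N (leqnn N)) /= Ne] := near_infty_natSinv_lt (PosNum e2).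
have [|a [/= xa Da]] := dD (ball x N) _ (ball_open x N).
  by exists x; rewrite /ball /= (iffRL (dxx x x) erefl) invr_gt0 ltr0n.
exists (ball a N); first by split; [exists (a, N)|rewrite /ball /= dC].
move=> y ay; apply/OA/xeO; rewrite /ball /= in xa ay *.
by have := dtri x a y; move: xa ay Ne; set r := N.+1%:R^-1; lra.
Qed.

Lemma second_countable_lindelof (I : Type) (J : set I) (O : I -> set X) :
  @second_countable X -> (forall i, J i -> open (O i)) ->
  exists K : set I,
    [/\ countable K, K `<=` J & \bigcup_(i in J) O i `<=` \bigcup_(i in K) O i].
Proof.
move=> [B cB [_ Bbasis]] oO.
have /choice[s hs] : forall b : set X, exists i : option I,
    if i is Some i then J i /\ b `<=` O i else ~ exists2 i, J i & b `<=` O i.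
  move=> b; have [[i Ji bO]|nex] := pselect (exists2 i, J i & b `<=` O i).
  - by exists (Some i).
  - by exists None.
exists (\bigcup_(b in B) if s b is Some i then [set i] else set0); split.
- apply: bigcup_countable => // b _.
  by case: (s b) => [i|]; [exact: countable1|exact: countable0].
- by move=> i [b _]; move: (hs b); case: (s b) => // j [Jj _] ->.
- move=> x [i Ji Oix].
  have [b [Bb bx] bO] := Bbasis x (O i) (open_nbhs_nbhs (conj (oO i Ji) Oix)).
  move: (hs b); case sb: (s b) => [j|]; last by case; exists i.
  by move=> [Jj bOj]; exists j; [exists b => //; rewrite sb|exact: bOj].
Qed.

End SecondCountable.

Section UscEnvelope.
Context {R : realType} {X : topologicalType}.
Implicit Types phi psi : X -> \bar R.
Local Open Scope ereal_scope.

Definition usc_majorant phi psi := usc psi /\ nonneg psi /\ le_star phi psi.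

Lemma Uenv_le {phi psi} x : usc_majorant phi psi -> Uenv phi x <= psi x.
Proof. by move=> mpsi; apply: ereal_inf_lbound; exists psi. Qed.

Lemma Uenv_lt {phi x r} :
  Uenv phi x < r -> exists2 psi, usc_majorant phi psi & psi x < r.
Proof. by move=> /ereal_inf_lt[_ [psi mpsi <-] psixr]; exists psi. Qed.

Lemma Uenv_usc phi : usc (Uenv phi).
Proof.
move=> r.
have -> : [set x | Uenv phi x < r%:E] =
          \bigcup_(psi in usc_majorant phi) [set x | psi x < r%:E].
  apply/seteqP; split=> x /=; first by move=> /Uenv_lt[psi mpsi psixr]; exists psi.
  by move=> [psi mpsi /= psixr]; exact: le_lt_trans (Uenv_le x mpsi) psixr.
by apply: bigcup_open => psi [+ _]; apply.
Qed.

Lemma Uenv_nonneg phi : nonneg (Uenv phi).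
Proof. by move=> x; apply/ereal_infP => _ [psi [_ [+ _]] <-]; apply. Qed.

Lemma Uenv_le_star phi : @second_countable X -> le_star phi (Uenv phi).
Proof.
move=> scX.
have /choice[K hK] : forall q : rat, exists K, [/\ countable K, K `<=` usc_majorant phi &
    \bigcup_(psi in usc_majorant phi) [set x | psi x < (ratr q)%:E] `<=`
    \bigcup_(psi in K) [set x | psi x < (ratr q)%:E]].
  by move=> q; apply: second_countable_lindelof => // psi [+ _]; apply.
apply: (@meagreS _ _ (\bigcup_(i in [set: rat] `*`` K) [set x | i.2 x < phi x])).
  move=> x /ereal_rat_between[q /andP[Uq qphi]].
  have [psi mpsi psiq] := Uenv_lt Uq.
  have [_ _ /(_ x) [|psi' Kpsi' psi'q]] := hK q; first by exists psi.
  by exists (q, psi') => //=; exact: lt_trans qphi.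
apply: meagre_bigcup_countable => [|[q psi] [_ /= Kpsi]].
  by apply: countableXR => // q _; case: (hK q).
by case: (hK q) => _ /(_ _ Kpsi)[_ []].
Qed.

Lemma ge_star_Uenv phi psi :
  usc_majorant phi psi -> ge_star phi psi -> ge_star phi (Uenv phi).
Proof.
move=> mpsi; apply: meagreS => x /= phiU.
exact: lt_le_trans phiU (Uenv_le x mpsi).
Qed.

Lemma meagre_lt_Uenv phi (r : R) : (0 <= r)%R -> le_star phi (Uenv phi) ->
  baire_property [set x | phi x < r%:E] ->
  meagre [set x | phi x < r%:E /\ r%:E < Uenv phi x].
Proof.
set A := [set x | _ < _] => r0 leU [V [oV mAV]].
pose psi := Uenv phi \min (fun x => if `[< V x >] then r%:E else +oo).
have mpsi : usc_majorant phi psi.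
  split; first exact: usc_min (Uenv_usc _) (usc_cst_on_open _ _ oV).
  split.
    by move=> x; rewrite /psi /= le_min Uenv_nonneg; case: asboolP; rewrite ?lee_fin ?leey.
  apply: meagreS (meagreU leU mAV) => x; rewrite /psi /= gt_min => /orP[|]; first by left.
  case: asboolP => [Vx rphi|_]; last by rewrite ltNge leey.
  by right; right; split=> // /(lt_trans rphi); rewrite ltxx.
apply: meagreS mAV => x [Ax rU]; left; split=> // Vx.
have := Uenv_le x mpsi; rewrite /psi /= le_min asboolT // => /andP[_ Ur].
by move: rU; rewrite ltNge Ur.
Qed.

Lemma Uenv_ge_star phi : @second_countable X -> nonneg phi ->
  baire_measurable phi -> ge_star phi (Uenv phi).
Proof.
move=> scX phi0 bphi.
apply: (@meagreS _ _ (\bigcup_(q in [set q : rat | (0 <= ratr q :> R)%R])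
    [set x | phi x < (ratr q)%:E /\ (ratr q)%:E < Uenv phi x])).
  move=> x /ereal_rat_between[q /andP[phiq qU]]; exists q => //.
  by rewrite /= -lee_fin; exact: le_trans (phi0 x) (ltW phiq).
apply: meagre_bigcup => q q0; apply: meagre_lt_Uenv => //; first exact: Uenv_le_star.
exact: bphi _ (@open_ereal_lt_ereal R (ratr q)%:E).
Qed.

End UscEnvelope.

Theorem lemma3p2 (R : realType) (X : topologicalType)
  (hX : polish R X) (phi : X -> \bar R) (hphi : nonneg phi) :
  [/\ usc (Uenv phi),
      nonneg (Uenv phi),
      le_star phi (Uenv phi),
      (forall psi : X -> \bar R, usc psi -> nonneg psi -> le_star phi psi ->
         forall x, (Uenv phi x <= psi x)%E) &
      [/\ ge_star phi (Uenv phi) <-> eq_star phi (Uenv phi),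
          eq_star phi (Uenv phi) <->
            (exists psi : X -> \bar R, [/\ usc psi, nonneg psi & eq_star phi psi]) &
          (exists psi : X -> \bar R, [/\ usc psi, nonneg psi & eq_star phi psi]) <->
            baire_measurable phi]].
Proof.
have scX := polish_second_countable hX.
have leU := Uenv_le_star phi scX.
have Uusc := Uenv_usc phi; have U0 := Uenv_nonneg phi.
split=> //; first by move=> psi upsi psi0 le_psi x; apply: Uenv_le.
split.
- by split=> [?|[]//]; split.
- split=> [?|[psi [upsi psi0 [le_psi ge_psi]]]]; first by exists (Uenv phi).
  by split=> //; apply: ge_star_Uenv ge_psi.
- split=> [[psi [upsi _ /eq_star_meagre_neq]]|bphi].
    exact: baire_measurable_meagre_neq (usc_baire_measurable upsi).
  by exists (Uenv phi); split=> //; split=> //; exact: Uenv_ge_star.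
Qed.
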